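(* Let $A$ be a $d$-dimensional polystochastic matrix of order $n\ge 2$. Suppose there are subsets $S_1,\dots,S_d\subseteq\{0,\dots,n-1\}$ with $|S_i|=n-1$ such that $a_\alpha\in\{0,1\}$ for all $\alpha\in S_1\times\dots\times S_d$. Then $A$ is a multidimensional permutation, i.e. all entries of $A$ are in $\{0,1\}$.
   Context: $A=(a_\alpha)_{\alpha\in\{0,\dots,n-1\}^d}$ is polystochastic if nonnegative and every line (set of indices obtained by fixing all coordinates but one) sums to $1$. A multidimensional permutation is a polystochastic $(0,1)$-matrix. *)

From mathcomp Require Import all_boot all_order all_algebra.
Set Implicit Arguments. Unset Strict Implicit. Unset Printing Implicit Defensive.
Import Order.TTheory GRing.Theory Num.Theory.
Local Open Scope ring_scope.

Definition mdmatrix (R : Type) (d n : nat) := {ffun {ffun 'I_d -> 'I_n} -> R}.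

Definition upd (d n : nat) (alpha : {ffun 'I_d -> 'I_n}) (k : 'I_d) (j : 'I_n)
  : {ffun 'I_d -> 'I_n} := [ffun i => if i == k then j else alpha i].

Definition polystochastic (R : numDomainType) (d n : nat) (A : mdmatrix R d n) :=
  (forall alpha, 0 <= A alpha) /\
  (forall (alpha : {ffun 'I_d -> 'I_n}) (k : 'I_d), \sum_(j < n) A (upd alpha k j) = 1).

Definition is01 (R : numDomainType) (x : R) := x = 0 \/ x = 1.

Definition md_permutation (R : numDomainType) (d n : nat) (A : mdmatrix R d n) :=
  polystochastic A /\ forall alpha, is01 (A alpha).

From mathcomp Require Import all_boot all_order all_algebra.
Import Order.TTheory GRing.Theory Num.Theory.

Set Implicit Arguments.
Unset Strict Implicit.
Unset Printing Implicit Defensive.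

Local Open Scope ring_scope.

(* Induct on the number of coordinates of alpha lying outside S.  If alpha i is
   outside S i, then S i is the complement of {alpha i}, so every other entry of
   the line through alpha in direction i has fewer outside coordinates and is
   0/1 by induction; an entry of a nonnegative line summing to 1 whose other
   entries are all 0/1 is itself 0/1. *)

Lemma is01_sum_line (R : numDomainType) (I : finType) (F : I -> R) (j0 : I) :
  (forall j, 0 <= F j) -> \sum_j F j = 1 ->
  (forall j, j != j0 -> is01 (F j)) -> is01 (F j0).
Proof.
move=> F_ge0 F_sum F01; move: F_sum; rewrite (bigD1 j0) //=.
case: (pickP (fun j => (j != j0) && (F j == 1))) => [j1 /andP[j1j0 /eqP F1]|no1].
  rewrite (bigD1 j1) //= F1 addrCA -{2}[1]addr0 => /addrI /eqP.
  have rest_ge0 : 0 <= \sum_(j | (j != j0) && (j != j1)) F j.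
    by apply: sumr_ge0 => j _; exact: F_ge0.
  by rewrite paddr_eq0 // => /andP[/eqP F0 _]; left.
rewrite big1 ?addr0 => [->|j j_j0]; first by right.
have := no1 j; rewrite j_j0 /=.
by case: (F01 j j_j0) => ->; rewrite ?eqxx.
Qed.

Lemma card_predn_setC1 (T : finType) (S : {set T}) (a : T) :
  #|S| = #|T|.-1 -> a \notin S -> S = [set~ a].
Proof.
move=> cardS aS; apply/eqP; rewrite eqEcard cardsC1 cardS leqnn andbT.
by apply/subsetP => x xS; rewrite in_setC1; apply: contraNneq aS => <-.
Qed.

Section Upd.
Variables (d n : nat).
Implicit Types (alpha : {ffun 'I_d -> 'I_n}) (i k : 'I_d) (j : 'I_n).

Lemma upd_id alpha k : upd alpha k (alpha k) = alpha.
Proof. by apply/ffunP => i; rewrite ffunE; case: eqP => // ->. Qed.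

Lemma upd_eq alpha k j : upd alpha k j k = j.
Proof. by rewrite ffunE eqxx. Qed.

Lemma upd_neq alpha k j i : i != k -> upd alpha k j i = alpha i.
Proof. by rewrite ffunE => /negbTE ->. Qed.

Definition outside (S : 'I_d -> {set 'I_n}) alpha := [set i | alpha i \notin S i].

Lemma outside_upd_proper (S : 'I_d -> {set 'I_n}) alpha i j :
  i \in outside S alpha -> j \in S i ->
  outside S (upd alpha i j) \proper outside S alpha.
Proof.
rewrite !inE => alpha_i jSi; apply/properP; split.
  apply/subsetP => k; rewrite !inE.
  by have [->|ki] := eqVneq k i; rewrite ?upd_eq ?jSi // upd_neq.
by exists i; rewrite !inE ?upd_eq ?jSi.
Qed.

End Upd.

Theorem mainTheorem8 (R : realFieldType) (d n : nat) (A : mdmatrix R d n)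
  (S : 'I_d -> {set 'I_n}) :
  (2 <= n)%N ->
  polystochastic A ->
  (forall i, #|S i| = n.-1) ->
  (forall alpha : {ffun 'I_d -> 'I_n}, (forall i, alpha i \in S i) -> is01 (A alpha)) ->
  md_permutation A.
Proof.
move=> _ [A_ge0 A_line] cardS A01; split=> // alpha.
move: {2}#|_|.+1 (ltnSn #|outside S alpha|) => m.
elim: m alpha => // m IHm alpha; rewrite ltnS => out_le.
have [out0|[i i_out]] := set_0Vmem (outside S alpha).
  apply: A01 => i; apply: contraT => alpha_i.
  by have := in_set0 i; rewrite -out0 inE alpha_i.
have Si : S i = [set~ alpha i].
  by apply: card_predn_setC1; rewrite ?card_ord //; rewrite inE in i_out.
rewrite -(upd_id alpha i).
apply: (is01_sum_line (F := fun j => A (upd alpha i j))) => // j j_ai.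
apply: IHm; apply: leq_trans out_le; apply: proper_card.
by apply: outside_upd_proper; rewrite // Si in_setC1.
Qed.
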